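(* For $\sigma^2>0$ let $\Phi(\cdot;\sigma^2)$ denote the cumulative distribution function of $\mathcal{N}(0,\sigma^2)$. For every $\mu\ne0$ and $\nu^2,\sigma^2>0$, neither $\frac{\Phi(\mu;\sigma^2)}{\Phi(0;\nu^2)}$ nor $\frac{\Phi(0;\nu^2)}{\Phi(\mu;\sigma^2)}$ lies in the interval \[ \Big[1-\tfrac{1}{\sqrt{2\pi e}}\min\{1,|\mu|/\sigma\},\ 1+\tfrac{1}{\sqrt{2\pi e}}\min\{1,|\mu|/\sigma\}\Big]. \] *)

From HB Require Import structures.
From mathcomp Require Import all_boot all_order all_algebra.
From mathcomp Require Import all_classical all_reals all_analysis.
Set Implicit Arguments. Unset Strict Implicit. Unset Printing Implicit Defensive.
Import Order.TTheory GRing.Theory Num.Theory.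
Local Open Scope classical_set_scope.
Local Open Scope ring_scope.

Definition Phi {R : realType} (x s2 : R) : R :=
  fine (normal_prob 0 (Num.sqrt s2) `]-oo, x]).

From HB Require Import structures.
From mathcomp Require Import all_boot all_order all_algebra.
From mathcomp Require Import all_classical all_reals all_analysis.
From mathcomp Require Import ring lra measurable_realfun.
Import Order.TTheory GRing.Theory Num.Theory.
Import numFieldTopology.Exports.
Local Open Scope ring_scope.

(* Phi(0; nu^2) = 1/2 by symmetry of the centred normal density.  With
   s = sqrt(sigma^2), Phi(mu; sigma^2) - 1/2 is, up to sign, the normal mass of
   the interval between 0 and mu.  That interval contains one of length
   min(s, |mu|) inside [-s, s], where the density is at least
   e^(-1/2) / (s sqrt(2 pi)); hence |Phi(mu; sigma^2) - 1/2| >= c.  Since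
   2 pi e > 4 we have c < 1/2, and a gap of c around 1/2 pushes both ratios
   out of [1 - c, 1 + c]. *)

Lemma sqrt_2pie_gt2 {R : realType} : 2 < Num.sqrt (2 * pi * expR 1 : R).
Proof.
have e_ge2 : 2 <= expR 1 :> R by have := expR_ge1Dx (1 : R); lra.
have pi_ge2 := pi_ge2 R.
have sqrt4 : Num.sqrt (2 ^+ 2) = 2 :> R by rewrite sqrtr_sqr ger0_norm.
rewrite -[X in X < _]sqrt4 ltr_sqrt; nra.
Qed.

Lemma half_ratio_notin_itv {R : realFieldType} (q c : R) :
  0 < c < 2^-1 -> 0 <= q -> c <= `|q - 2^-1| ->
  q / 2^-1 \notin `[1 - c, 1 + c] /\ 2^-1 / q \notin `[1 - c, 1 + c].
Proof.
move=> /andP[c_gt0 c_lthalf] q_ge0; rewrite invrK ler_normr.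
rewrite !in_itv /= !negb_and -!ltNge => /orP[] gap.
- have q_gt0 : 0 < q by lra.
  by split; apply/orP; [right; lra | left; rewrite ltr_pdivrMr //; nra].
- split; first by apply/orP; left; lra.
  have [->|q_neq0] := eqVneq q 0; first by rewrite invr0 mulr0; apply/orP; left; lra.
  have q_gt0 : 0 < q by rewrite lt0r q_neq0.
  by apply/orP; right; rewrite ltr_pdivlMr //; nra.
Qed.

Section normal_bounds.
Context {R : realType}.
Local Open Scope classical_set_scope.

Lemma measure_Ny_itv_split (mu : {measure set measurableTypeR R -> \bar R})
    (a b : R) : a <= b ->
  mu `]-oo, b] = (mu `]-oo, a] + mu `]a, b])%E.
Proof.
move=> ab; rewrite -measureU //=.
  by rewrite -itv_bndbnd_setU // bnd_simp.
apply/seteqP; split => x //= []; rewrite /= !in_itv /= => xa /andP[ax _].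
by move: xa; rewrite leNgt ax.
Qed.

Lemma normal_pdf0N (s x : R) : s != 0 -> normal_pdf 0 s (- x) = normal_pdf 0 s x.
Proof. by move=> s0; rewrite /normal_pdf (negbTE s0) /normal_fun !subr0 sqrrN. Qed.

Lemma normal_probNy0 (s : R) : s != 0 -> normal_prob 0 s `]-oo, 0] = (2^-1)%:E.
Proof.
move=> s0; have pdfN x := normal_pdf0N s x s0.
have := ge0_symfun_integralT (@normal_pdf_ge0 R 0 s) (@continuous_normal_pdf R 0 s s0)
  (fun x => esym (pdfN x)).
rewrite integral_normal_pdf -set_itvcy => total.
rewrite /normal_prob -{1}oppr0 ge0_integration_by_substitutionNy; last 2 first.
- exact: continuous_subspaceT (@continuous_normal_pdf R 0 s s0).
- by move=> x _; exact: normal_pdf_ge0.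
under eq_integral do rewrite /= pdfN.
move: total; case: (\int[_]_(_ in _) _)%E => [r [] total||] //=.
- by congr EFin; lra.
- by rewrite mulry gtr0_sg ?ltr0n // mul1e.
- by rewrite mulrNy gtr0_sg ?ltr0n // mul1e.
Qed.

Lemma normal_peak_expRNhalf (s : R) : 0 < s ->
  normal_peak s * expR (- 2^-1) = (Num.sqrt (2 * pi * expR 1))^-1 / s.
Proof.
move=> s_gt0; have pi2_ge0 : 0 <= pi * 2 :> R by rewrite mulr_ge0 ?pi_ge0.
have sqrt_peak : Num.sqrt (s ^+ 2 * pi *+ 2) = s * Num.sqrt (pi * 2).
  by rewrite -mulr_natr -mulrA sqrtrM ?sqr_ge0 // sqrtr_sqr gtr0_norm.
have sqrt_2pie : Num.sqrt (2 * pi * expR 1) = Num.sqrt (pi * 2) * expR 2^-1 :> R.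
  have -> : expR 1 = expR 2^-1 ^+ 2 :> R by rewrite -expRM_natr mulVf.
  by rewrite (mulrC 2) sqrtrM // sqrtr_sqr gtr0_norm ?expR_gt0.
rewrite /normal_peak sqrt_peak sqrt_2pie expRN.
have sqrt_pi2_gt0 : 0 < Num.sqrt (pi * 2) :> R by rewrite sqrtr_gt0 mulr_gt0 ?pi_gt0.
by field; rewrite ?gt_eqF ?expR_gt0.
Qed.

Lemma normal_pdf0_lb (s x : R) : 0 < s -> `|x| <= s ->
  (Num.sqrt (2 * pi * expR 1))^-1 / s <= normal_pdf 0 s x.
Proof.
move=> s_gt0 xs; rewrite -normal_peak_expRNhalf // /normal_pdf gt_eqF //.
rewrite /normal_fun subr0 ler_pM2l ?normal_peak_gt0 ?gt_eqF // ler_expR.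
rewrite mulNr lerN2 ler_pdivrMr ?pmulrn_lgt0 ?exprn_gt0 //.
rewrite -(real_normK (num_real x)); have := normr_ge0 x; nra.
Qed.

Lemma normal_prob_itv_lb (s a b : R) : 0 < s -> - s <= a -> a < b -> b <= s ->
  (((b - a) * ((Num.sqrt (2 * pi * expR 1))^-1 / s))%:E <= normal_prob 0 s `]a, b])%E.
Proof.
move=> s_gt0 sa ab bs; set h := _ / s.
apply: (@le_trans _ _ (\int[lebesgue_measure]_(x in `]a, b]) h%:E)%E).
  by rewrite integral_cst //= lebesgue_measure_itv /= lte_fin ab -EFinD -EFinM mulrC.
apply: ge0_le_integral => //=.
- by move=> x _; rewrite lee_fin divr_ge0 ?invr_ge0 ?sqrtr_ge0 ?ltW.
- apply/measurable_EFinP; apply: measurable_funTS; exact: measurable_normal_pdf.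
- move=> x; rewrite /= in_itv /= => /andP[ax xb]; rewrite lee_fin normal_pdf0_lb //.
  by rewrite ler_norml; apply/andP; split; lra.
Qed.

Lemma EFin_Phi (x s2 : R) : (Phi x s2)%:E = normal_prob 0 (Num.sqrt s2) `]-oo, x].
Proof. by rewrite fineK // fin_num_measure. Qed.

Lemma Phi_ge0 (x s2 : R) : 0 <= Phi x s2.
Proof. by rewrite fine_ge0 // measure_ge0. Qed.

Lemma Phi0 (s2 : R) : 0 < s2 -> Phi 0 s2 = 2^-1.
Proof. by move=> s2_gt0; rewrite /Phi normal_probNy0 // gt_eqF // sqrtr_gt0. Qed.

Lemma Phi_half_gap (mu s2 : R) : 0 < s2 ->
  (Num.sqrt (2 * pi * expR 1))^-1 * Num.min 1 (`|mu| / Num.sqrt s2)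
    <= `|Phi mu s2 - 2^-1|.
Proof.
move=> s2_gt0; have [->|mu_neq0] := eqVneq mu 0.
  by rewrite normr0 mul0r min_r ?ler01 // mulr0 normr_ge0.
set s := Num.sqrt s2; have s_gt0 : 0 < s by rewrite sqrtr_gt0.
set C := _^-1; set h := Num.min s `|mu|.
have -> : C * Num.min 1 (`|mu| / s) = h * (C / s).
  have -> : h = Num.min 1 (`|mu| / s) * s by rewrite minr_pMl ?ltW // mul1r divfK ?gt_eqF.
  by field; rewrite gt_eqF.
have [h_le_s h_le_mu] : h <= s /\ h <= `|mu| by split; rewrite ge_min lexx ?orbT.
have half : (2^-1)%:E = normal_prob 0 s `]-oo, 0] by rewrite normal_probNy0 // gt_eqF.
have fin_prob A : measurable A -> normal_prob 0 s A \is a fin_num.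
  exact: fin_num_measure.
case/lt_total/orP: mu_neq0 => [mu_lt0 | mu_gt0].
- rewrite ler_normr; apply/orP; right; rewrite opprB lerBrDr.
  rewrite -lee_fin EFinD EFin_Phi half.
  rewrite (measure_Ny_itv_split (normal_prob 0 s) _ _ (ltW mu_lt0)) addeC.
  rewrite leeD2l ?fin_prob //.
  have h_gt0 : 0 < h by rewrite lt_min s_gt0 normr_gt0 ltr0_neq0.
  apply: (@le_trans _ _ (normal_prob 0 s `]- h, 0])).
  - by have := @normal_prob_itv_lb s (- h) 0 s_gt0; rewrite sub0r opprK; apply; lra.
  - rewrite le_measure ?inE // => x /=; rewrite !in_itv /= => /andP[hx ->]; rewrite andbT.
    by move: h_le_mu; rewrite ltr0_norm //; lra.
- rewrite ler_normr; apply/orP; left; rewrite lerBrDl.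
  rewrite -lee_fin EFinD EFin_Phi half.
  rewrite (measure_Ny_itv_split (normal_prob 0 s) _ _ (ltW mu_gt0)) leeD2l ?fin_prob //.
  have h_gt0 : 0 < h by rewrite lt_min s_gt0 normr_gt0 gt_eqF.
  apply: (@le_trans _ _ (normal_prob 0 s `]0, h])).
  - by have := @normal_prob_itv_lb s 0 h s_gt0; rewrite subr0; apply; lra.
  - rewrite le_measure ?inE // => x /=; rewrite !in_itv /= => /andP[-> xh] /=.
    by move: h_le_mu; rewrite gtr0_norm //; lra.
Qed.
End normal_bounds.

Theorem lemmaB2 (R : realType) (mu nu2 sigma2 : R) :
  mu != 0 -> 0 < nu2 -> 0 < sigma2 ->
  let c := (Num.sqrt (2 * pi * expR 1))^-1 * Num.min 1 (`|mu| / Num.sqrt sigma2) in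
  Phi mu sigma2 / Phi 0 nu2 \notin `[1 - c, 1 + c] /\
  Phi 0 nu2 / Phi mu sigma2 \notin `[1 - c, 1 + c].
Proof.
move=> mu_neq0 nu2_gt0 sigma2_gt0 c; rewrite Phi0 //.
apply: half_ratio_notin_itv; [|exact: Phi_ge0|exact: Phi_half_gap].
have sqrt_gt0 : 0 < Num.sqrt (2 * pi * expR 1) :> R by exact: lt_trans sqrt_2pie_gt2.
have C_lt_half : (Num.sqrt (2 * pi * expR 1))^-1 < 2^-1 :> R.
  by rewrite ltf_pV2 ?posrE ?sqrt_2pie_gt2.
rewrite /c; set m := Num.min 1 _.
have m_gt0 : 0 < m by rewrite lt_min ltr01 divr_gt0 ?normr_gt0 ?sqrtr_gt0.
have m_le1 : m <= 1 by rewrite ge_min lexx.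
rewrite mulr_gt0 ?invr_gt0 //=; apply: le_lt_trans C_lt_half.
by rewrite ger_pMr ?invr_gt0.
Qed.
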